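(* Let $d,n\in\mathbb{N}$, let $\mathcal{P}$ be a unit hypercube partition of $\mathbb{R}^{d}$, and let $X_{1},\ldots,X_{n}\in\mathcal{P}$ be such that $X_i$ and $X_j$ are adjacent for all $i,j\in[n]$. Then there is a point $\vec{p}\in\mathbb{R}^{d}$ such that $\vec{p}\in\overline{X_{i}}$ for all $i\in[n]$.
   Context: A unit hypercube is a set $\vec{a}+[0,1)^d$ with $\vec{a}\in\mathbb{R}^d$; a unit hypercube partition is a partition of $\mathbb{R}^d$ all of whose members are unit hypercubes. $\overline{X}$ denotes closure; $X$ and $Y$ are adjacent if $\overline{X}\cap\overline{Y}\ne\emptyset$. *)

(* points of R^d are row vectors 'rV[R]_d over a
   realType R, with the library's (product/max-norm) topology. *)
From HB Require Import structures.
From mathcomp Require Import all_boot all_order all_algebra.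
From mathcomp Require Import all_classical all_reals all_analysis.
Set Implicit Arguments. Unset Strict Implicit. Unset Printing Implicit Defensive.
Import Order.TTheory GRing.Theory Num.Theory.
Import numFieldNormedType.Exports.
Local Open Scope classical_set_scope.
Local Open Scope ring_scope.

Definition unit_cube (R : realType) (d : nat) (a : 'rV[R]_d) : set 'rV[R]_d :=
  [set x | forall i : 'I_d, a 0 i <= x 0 i < a 0 i + 1].

Definition is_unit_cube (R : realType) (d : nat) (X : set 'rV[R]_d) : Prop :=
  exists a : 'rV[R]_d, X = unit_cube a.

Definition unit_cube_partition (R : realType) (d : nat)
    (P : set (set 'rV[R]_d)) : Prop :=
  [/\ (forall X, P X -> is_unit_cube X),
      (forall X, P X -> X !=set0),
      (forall x : 'rV[R]_d, exists2 X, P X & X x) &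
      (forall X Y, P X -> P Y -> X `&` Y !=set0 -> X = Y)].

Definition cube_adjacent (R : realType) (d : nat) (X Y : set 'rV[R]_d) : Prop :=
  closure X `&` closure Y !=set0.

From HB Require Import structures.
From mathcomp Require Import all_boot all_order all_algebra.
From mathcomp Require Import all_classical all_reals all_analysis.
From mathcomp Require Import lra.
Import Order.TTheory GRing.Theory Num.Theory.
Import numFieldNormedType.Exports.
Local Open Scope classical_set_scope.
Local Open Scope ring_scope.

(* The closure of
   a + [0,1)^d is the box a + [0,1]^d, and two such boxes meet iff their
   corners differ by at most 1 in every coordinate.  Hence, for pairwise
   adjacent cubes, the point whose k-th coordinate is the largest k-th
   corner coordinate lies in every closed box (Helly's theorem for boxes). *)

Section UnitCubeClosure.
Context {R : realType} {d : nat}.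
Implicit Types (a b p : 'rV[R]_d).

Definition closed_unit_cube a : set 'rV[R]_d :=
  [set p | forall k, a 0 k <= p 0 k <= a 0 k + 1].

Lemma ball_rowP p q (e : R) :
  ball p e q <-> 0 < e /\ forall k, `|p 0 k - q 0 k| < e.
Proof.
split=> -[e0 pq]; split=> //.
- by move=> k; have := pq 0 k; rewrite -ball_normE.
- by move=> i k; rewrite (ord1 i) -ball_normE; exact: pq.
Qed.

Lemma closure_unit_cube_sub a : closure (unit_cube a) `<=` closed_unit_cube a.
Proof.
move=> p cl k; apply/andP; split; rewrite leNgt; apply/negP => out.
- have e0 : 0 < a 0 k - p 0 k by rewrite subr_gt0.
  have [x [/(_ k) /andP[xa _] /ball_rowP [_ /(_ k)]]] := cl _ (nbhsx_ballx p _ e0).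
  rewrite ltr_norml => /andP[+ _]; lra.
- have e0 : 0 < p 0 k - (a 0 k + 1) by rewrite subr_gt0.
  have [x [/(_ k) /andP[_ xa] /ball_rowP [_ /(_ k)]]] := cl _ (nbhsx_ballx p _ e0).
  rewrite ltr_norml => /andP[_]; lra.
Qed.

(* A point of the closed box is approached from inside the half-open cube by
   moving each coordinate lying on an upper face down by s < min(e, 1). *)
Lemma closed_unit_cube_sub_closure a : closed_unit_cube a `<=` closure (unit_cube a).
Proof.
move=> p inp B /nbhs_ballP [e e0 eB].
pose s := Num.min (e / 2) (1 / 2).
have s0 : 0 < s by rewrite lt_min !divr_gt0.
have se : s < e by rewrite gt_min ltr_pdivrMr // ltr_pMr // ltr1n.
have s1 : s <= 1 / 2 by rewrite ge_min lexx orbT.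
pose x := \row_k (if p 0 k < a 0 k + 1 then p 0 k else p 0 k - s).
exists x; split.
- move=> k; have /andP[ap pa] := inp k; rewrite mxE; case: ifP => [-> | top].
    by rewrite ap.
  have -> : p 0 k = a 0 k + 1 by apply/eqP; rewrite eq_le pa leNgt top.
  apply/andP; split; lra.
- apply: eB; apply/ball_rowP; split=> // k; rewrite mxE.
  case: ifP => _; first by rewrite subrr normr0.
  by rewrite opprB addrC subrK gtr0_norm.
Qed.

Lemma closure_unit_cube a : closure (unit_cube a) = closed_unit_cube a.
Proof.
by apply/seteqP; split; [exact: closure_unit_cube_sub | exact: closed_unit_cube_sub_closure].
Qed.

Lemma cube_adjacent_corner_le a b :
  cube_adjacent (unit_cube a) (unit_cube b) -> forall k, a 0 k <= b 0 k + 1.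
Proof.
rewrite /cube_adjacent !closure_unit_cube => -[q [qa qb]] k.
by move: (qa k) (qb k) => /andP[aq _] /andP[_ qb1]; lra.
Qed.

Lemma closed_unit_cubes_common_point {I : finType} (a : I -> 'rV[R]_d) (i0 : I) :
  (forall i j k, a i 0 k <= a j 0 k + 1) ->
  exists p, forall i, closed_unit_cube (a i) p.
Proof.
move=> near; pose top k := [arg max_(i > i0) a i 0 k]%O.
exists (\row_k a (top k) 0 k) => i k; rewrite mxE /top.
by case: arg_maxP => //= j _ jmax; rewrite near jmax.
Qed.

End UnitCubeClosure.

Theorem mainTheorem13 (R : realType) (d n : nat) (P : set (set 'rV[R]_d))
    (X : 'I_n -> set 'rV[R]_d) :
  unit_cube_partition P ->
  (forall i, P (X i)) ->
  (forall i j, cube_adjacent (X i) (X j)) ->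
  exists p : 'rV[R]_d, forall i, closure (X i) p.
Proof.
move=> [cubes _ _ _] XP adj.
have /choice [a Xa] : forall i, exists a, X i = unit_cube a.
  by move=> i; exact: cubes _ (XP i).
case: n X XP adj a Xa => [|n] X _ adj a Xa; first by exists 0 => -[].
have near i j k : a i 0 k <= a j 0 k + 1.
  by apply: cube_adjacent_corner_le; rewrite -!Xa.
have [p inp] := closed_unit_cubes_common_point a ord0 near.
by exists p => i; rewrite Xa closure_unit_cube.
Qed.
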